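(* Let $\mathsf{X} = \langle \mathsf{E}, \mathsf{po}, \mathsf{rf}, \mathsf{mo}\rangle$ be a 1-Writer execution graph. Then for $\mathcal{M} \in \{\mathsf{SRA}, \mathsf{RA}\}$, $\mathsf{X}$ is consistent with $\mathcal{M}$ if and only if $\mathsf{mo}$ agrees with $\mathsf{po}$ and $\mathsf{X}$ is consistent with $\mathsf{WRA}$.
   Context: An event is either a read $\mathtt{r}(x,v)$ or a write $\mathtt{w}(x,v)$ of a value $v$ to/from a shared variable $x$; every event belongs to a thread. An execution graph $\mathsf{X}=\langle \mathsf{E},\mathsf{po},\mathsf{rf},\mathsf{mo}\rangle$ consists of a finite set of events $\mathsf{E}$; the program order $\mathsf{po}$, a strict partial order that totally orders the events of each thread (and relates no events of distinct threads); a reads-from relation $\mathsf{rf}$ relating writes to reads, such that every read $r$ is related to exactly one write $\mathsf{rf}^{-1}(r)$ with the same variable and value; and a modification order $\mathsf{mo}=\bigcup_x \mathsf{mo}_x$, where $\mathsf{mo}_x$ is a strict total order on the writes to $x$. $\mathsf{X}$ is 1-Writer if for every variable $x$ at most one thread contains writes to $x$. $\mathsf{mo}$ agrees with $\mathsf{po}$ if $w\,\mathsf{mo}\,w'$ implies $w\,\mathsf{po}\,w'$. The happens-before relation is $\mathsf{hb}=(\mathsf{po}\cup\mathsf{rf})^+$. Axioms: porf-acyclicity: $\mathsf{po}\cup\mathsf{rf}$ is acyclic. Write-coherence: no writes $w,w'$ to the same $x$ with $w\,\mathsf{mo}_x\,w'$ and $w'\,\mathsf{hb}\,w$. Strong-write-coherence: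 $\mathsf{hb}\cup\mathsf{mo}$ is acyclic. Read-coherence: no read $r$ of $x$ and writes $w,w'$ of $x$ with $w\,\mathsf{rf}\,r$, $w\,\mathsf{mo}_x\,w'$, $w'\,\mathsf{hb}\,r$. Weak-read-coherence: no read $r$ of $x$ and writes $w,w'$ of $x$ with $w\,\mathsf{rf}\,r$, $w\,\mathsf{hb}\,w'$, $w'\,\mathsf{hb}\,r$. Consistency with $\mathsf{WRA}$: porf-acyclicity and weak-read-coherence; with $\mathsf{RA}$: porf-acyclicity, write-coherence and read-coherence; with $\mathsf{SRA}$: porf-acyclicity, strong-write-coherence and read-coherence. *)

From mathcomp Require Import all_boot.
From Stdlib Require Import Relations.
Set Implicit Arguments. Unset Strict Implicit. Unset Printing Implicit Defensive.

Inductive kind := Rd | Wr.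

Record exec (E : finType) := Exec {
  tid  : E -> nat;
  knd  : E -> kind;
  loc  : E -> nat;
  vl   : E -> nat;
  po   : E -> E -> Prop;
  rf   : E -> E -> Prop;
  mo   : E -> E -> Prop }.

Section Defs.
Variable E : finType.
Variable X : exec E.

Definition isR (e : E) := knd X e = Rd.
Definition isW (e : E) := knd X e = Wr.

Definition wf_exec : Prop :=
  (forall a, ~ po X a a) /\
  (forall a b c, po X a b -> po X b c -> po X a c) /\
  (forall a b, tid X a = tid X b -> a <> b -> po X a b \/ po X b a) /\
  (forall a b, po X a b -> tid X a = tid X b) /\
  (forall w r, rf X w r ->
     isW w /\ isR r /\ loc X w = loc X r /\ vl X w = vl X r) /\
  (forall r, isR r -> exists! w, rf X w r) /\
  (* mo = union over x of mo_x, mo_x a strict total order on writes to x *)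
  (forall a b, mo X a b -> isW a /\ isW b /\ loc X a = loc X b) /\
  (forall a, ~ mo X a a) /\
  (forall a b c, mo X a b -> mo X b c -> mo X a c) /\
  (forall a b, isW a -> isW b -> loc X a = loc X b -> a <> b ->
     mo X a b \/ mo X b a).

Definition one_writer : Prop :=
  forall a b, isW a -> isW b -> loc X a = loc X b -> tid X a = tid X b.

Definition mo_agrees_po : Prop := forall a b, mo X a b -> po X a b.

Definition porf : relation E := fun a b => po X a b \/ rf X a b.
Definition hb : relation E := clos_trans E porf.

Definition porf_acyclic : Prop := forall a, ~ clos_trans E porf a a.

Definition write_coherence : Prop :=
  ~ exists w w', isW w /\ isW w' /\ loc X w = loc X w' /\
                 mo X w w' /\ hb w' w.

Definition strong_write_coherence : Prop :=
  forall a, ~ clos_trans E (fun x y => hb x y \/ mo X x y) a a.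

Definition read_coherence : Prop :=
  ~ exists r w w', isR r /\ isW w /\ isW w' /\
        loc X r = loc X w /\ loc X r = loc X w' /\
        rf X w r /\ mo X w w' /\ hb w' r.

Definition weak_read_coherence : Prop :=
  ~ exists r w w', isR r /\ isW w /\ isW w' /\
        loc X r = loc X w /\ loc X r = loc X w' /\
        rf X w r /\ hb w w' /\ hb w' r.
End Defs.

Inductive model := WRA | RA | SRA.

Definition consistent (M : model) (E : finType) (X : exec E) : Prop :=
  match M with
  | WRA => porf_acyclic X /\ weak_read_coherence X
  | RA  => porf_acyclic X /\ write_coherence X /\ read_coherence X
  | SRA => porf_acyclic X /\ strong_write_coherence X /\ read_coherence X
  end.

From mathcomp Require Import all_boot.
From Stdlib Require Import Relations.
Set Implicit Arguments. Unset Strict Implicit.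

(* SRA-consistency implies RA-consistency trivially, so it suffices to close
   the cycle SRA -> RA -> (mo agrees with po and WRA) -> SRA.  Under 1-Writer
   two mo-related writes lie in the same thread, hence are po-ordered, and
   write-coherence rules out the po-order opposite to mo.  A weak-read-
   coherence violation w hb w' hb r with w rf r violates read-coherence if
   w mo w' and write-coherence if w' mo w.  Conversely, once mo is
   contained in po, it is contained in hb, so hb ∪ mo has the same cycles as
   hb and read-coherence reduces to its weak form. *)

Section OneWriterConsistency.
Variables (E : finType) (X : exec E).

Lemma hb_trans a b c : hb X a b -> hb X b c -> hb X a c.
Proof. exact: t_trans. Qed.

Lemma po_hb a b : po X a b -> hb X a b.
Proof. by move=> ab; apply: t_step; left. Qed.

Section WellFormed.
Hypothesis wfX : wf_exec X.

Lemma wf_po_total a b : tid X a = tid X b -> a <> b -> po X a b \/ po X b a.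
Proof. by case: wfX => _ [_ [tot _]]; apply: tot. Qed.

Lemma wf_mo_writes a b : mo X a b -> [/\ isW X a, isW X b & loc X a = loc X b].
Proof. by case: wfX => _ [_ [_ [_ [_ [_ [mo_w _]]]]]] /mo_w [? [? ?]]. Qed.

Lemma wf_mo_irrefl a : ~ mo X a a.
Proof. by case: wfX => _ [_ [_ [_ [_ [_ [_ [irr _]]]]]]]; apply: irr. Qed.

Lemma wf_mo_total a b :
  isW X a -> isW X b -> loc X a = loc X b -> a <> b -> mo X a b \/ mo X b a.
Proof. by case: wfX => _ [_ [_ [_ [_ [_ [_ [_ [_ tot]]]]]]]]; apply: tot. Qed.

Lemma write_coherence_mo_hb w w' :
  write_coherence X -> mo X w w' -> ~ hb X w' w.
Proof.
move=> wc ww' w'w; have [Ww Ww' loc_ww'] := wf_mo_writes ww'.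
by apply: wc; exists w, w'.
Qed.

Lemma mo_agrees_po_of_write_coherence :
  one_writer X -> write_coherence X -> mo_agrees_po X.
Proof.
move=> one wc a b ab; have [Wa Wb loc_ab] := wf_mo_writes ab.
have neq_ab : a <> b by move=> eq_ab; subst b; exact: wf_mo_irrefl ab.
case: (wf_po_total (one _ _ Wa Wb loc_ab) neq_ab) => // ba.
by case: (write_coherence_mo_hb wc ab (po_hb ba)).
Qed.

Lemma weak_read_coherence_of_RA : consistent RA X -> weak_read_coherence X.
Proof.
case=> acyc [wc rc] [r [w [w' [Rr [Ww [Ww' [loc_rw [loc_rw' [wr [ww' w'r]]]]]]]]]].
have neq_ww' : w <> w' by move=> eq_ww'; subst w'; exact: acyc ww'.
case: (wf_mo_total Ww Ww' (etrans (esym loc_rw) loc_rw') neq_ww') => mo_ww'.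
  by apply: rc; exists r, w, w'.
exact: write_coherence_mo_hb wc mo_ww' ww'.
Qed.

End WellFormed.

Lemma consistent_SRA_RA : consistent SRA X -> consistent RA X.
Proof.
case=> acyc [swc rc]; split=> //; split=> //.
case=> w [w' [_ [_ [_ [ww' w'w]]]]]; apply: (swc w).
by apply: (t_trans _ _ _ w'); apply: t_step; [right | left].
Qed.

Section MoAgreesPo.
Hypothesis agree : mo_agrees_po X.

Lemma hb_mo_closure_hb a b :
  clos_trans E (fun x y => hb X x y \/ mo X x y) a b -> hb X a b.
Proof.
elim=> [x y [//|/agree/po_hb //] | x y z _ xy _ yz]; exact: hb_trans xy yz.
Qed.

Lemma strong_write_coherence_of_porf_acyclic :
  porf_acyclic X -> strong_write_coherence X.
Proof. by move=> acyc a /hb_mo_closure_hb; apply: acyc. Qed.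

Lemma read_coherence_of_weak : weak_read_coherence X -> read_coherence X.
Proof.
move=> wrc [r [w [w' [? [? [? [? [? [? [? ?]]]]]]]]]].
by apply: wrc; exists r, w, w'; do !split=> //; apply/po_hb/agree.
Qed.

Lemma consistent_SRA_of_WRA : consistent WRA X -> consistent SRA X.
Proof.
case=> acyc wrc; split=> //; split.
  exact: strong_write_coherence_of_porf_acyclic.
exact: read_coherence_of_weak.
Qed.

End MoAgreesPo.

End OneWriterConsistency.

Theorem lemma2 (E : finType) (X : exec E) :
  wf_exec X -> one_writer X ->
  forall M : model, (M = SRA \/ M = RA) ->
    (consistent M X <-> (mo_agrees_po X /\ consistent WRA X)).
Proof.
move=> wfX one M HM.
have RA_agree_WRA : consistent RA X -> mo_agrees_po X /\ consistent WRA X.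
  move=> cRA; have [acyc [wc _]] := cRA.
  split; first exact: mo_agrees_po_of_write_coherence.
  by split; last exact: weak_read_coherence_of_RA.
have agree_WRA_SRA : mo_agrees_po X /\ consistent WRA X -> consistent SRA X.
  by case=> /consistent_SRA_of_WRA.
case: HM => ->; split.
- by move/consistent_SRA_RA/RA_agree_WRA.
- exact: agree_WRA_SRA.
- exact: RA_agree_WRA.
- by move/agree_WRA_SRA/consistent_SRA_RA.
Qed.
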